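(* Let $\Gamma$ be a determined pointclass on $C^\omega$. Let $\langle\{a,b\},C,d,O,v,(\prec_a,\prec_b)\rangle$ be a two-player infinite sequential game with $O=\{y,x_1,\dots,x_n\}$ ($n\ge1$, all distinct), in which every outcome is realizable, $v$ is $\Gamma$-measurable, and the preferences are the linear orders $y\prec_a x_1\prec_a\cdots\prec_a x_n$ and $y\prec_b x_n\prec_b\cdots\prec_b x_1$. Then the game has a Pareto-optimal Nash equilibrium.
   Context: $C$ is a non-empty set of choices, $d:C^*\to\{a,b\}$ the chooser after each history, $v:C^\omega\to O$. A strategy of $X$ is a function $s:d^{-1}(\{X\})\to C$; a profile is identified with $\sigma:C^*\to C$, inducing the play $p(\sigma)$ with $p_n=\sigma(p_{<n})$. $\sigma$ is a Nash equilibrium if no player $X$ has a strategy $s$ with $v(p(\sigma))\prec_X v(p(\sigma_{X\mapsto s}))$ ($\sigma_{X\mapsto s}$ agrees with $s$ on $d^{-1}(\{X\})$, with $\sigma$ elsewhere). An outcome is realizable if it equals $v(p)$ for some $p\in C^\omega$. An outcome $o$ is Pareto-optimal if there is no realizable outcome $q$ such that $o\prec_X q$ for some player $X$ and $q\prec_Y o$ for no player $Y$; a Nash equilibrium is Pareto-optimal if its induced outcome is. A pointclass $\Gamma$ is a collection of subsets of $C^\omega$ closed under continuous preimages; it is determined if for every $W\in\Gamma$ and $D\subseteq C^*$ the win-lose game $\langle C,D,W\rangle$ (first player chooses after histories in $D$, second after the others, first player wins iff the play is in $W$) has a winning strategy for one of the players. $v$ is $\Gamma$-measurable if $v^{-1}[Q]\in\Gamma$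 for all $Q\subseteq O$. *)

From mathcomp Require Import all_boot.
Set Implicit Arguments. Unset Strict Implicit. Unset Printing Implicit Defensive.

Inductive player := pa | pb.

Definition player_eqb (X Y : player) : bool :=
  match X, Y with pa, pa | pb, pb => true | _, _ => false end.

Section Games.
Variable C : Type.

Definition prefix (p : nat -> C) (n : nat) : seq C := mkseq p n.

Fixpoint hist (sigma : seq C -> C) (n : nat) : seq C :=
  match n with
  | 0 => [::]
  | n'.+1 => rcons (hist sigma n') (sigma (hist sigma n'))
  end.

Definition play (sigma : seq C -> C) : nat -> C := fun n => sigma (hist sigma n).

(* A strategy of X (a function on d^{-1}(X)) is represented by any total
   function s : seq C -> C, only its values on d^{-1}(X) matter. *)
Definition deviate (d : seq C -> player) (sigma : seq C -> C) (X : player)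
  (s : seq C -> C) : seq C -> C :=
  fun h => if player_eqb (d h) X then s h else sigma h.

Definition nash_eq (O : Type) (d : seq C -> player) (v : (nat -> C) -> O)
  (prec : player -> O -> O -> Prop) (sigma : seq C -> C) : Prop :=
  ~ exists (X : player) (s : seq C -> C),
      prec X (v (play sigma)) (v (play (deviate d sigma X s))).

Definition realizable (O : Type) (v : (nat -> C) -> O) (o : O) : Prop :=
  exists p : nat -> C, v p = o.

Definition pareto_optimal (O : Type) (v : (nat -> C) -> O)
  (prec : player -> O -> O -> Prop) (o : O) : Prop :=
  ~ exists q : O, realizable v q /\ (exists X, prec X o q) /\
                  (forall Y, ~ prec Y q o).

(* Continuity on C^omega (product of discrete topologies). *)
Definition continuous_seq (f : (nat -> C) -> (nat -> C)) : Prop :=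
  forall (p : nat -> C) (n : nat), exists m : nat, forall q : nat -> C,
    (forall k, k < m -> q k = p k) -> forall k, k < n -> f q k = f p k.

Definition pointclass (Gamma : ((nat -> C) -> Prop) -> Prop) : Prop :=
  forall (W : (nat -> C) -> Prop) (f : (nat -> C) -> (nat -> C)),
    Gamma W -> continuous_seq f -> Gamma (fun p => W (f p)).

Definition consistent_on (D : seq C -> Prop) (s : seq C -> C) (p : nat -> C)
  : Prop := forall n, D (prefix p n) -> p n = s (prefix p n).

(* Win-lose game <C, D, W>: the first player chooses after histories in D,
   the second after the others; the first player wins iff the play is in W. *)
Definition first_wins (D : seq C -> Prop) (W : (nat -> C) -> Prop) : Prop :=
  exists s : seq C -> C, forall p, consistent_on D s p -> W p.

Definition second_wins (D : seq C -> Prop) (W : (nat -> C) -> Prop) : Prop :=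
  exists t : seq C -> C, forall p, consistent_on (fun h => ~ D h) t p -> ~ W p.

Definition determined (Gamma : ((nat -> C) -> Prop) -> Prop) : Prop :=
  forall W, Gamma W -> forall D : seq C -> Prop,
    first_wins D W \/ second_wins D W.

Definition measurable_in (O : Type) (Gamma : ((nat -> C) -> Prop) -> Prop)
  (v : (nat -> C) -> O) : Prop :=
  forall Q : O -> Prop, Gamma (fun p => Q (v p)).

End Games.

From Pilot Require Import Defs.
From mathcomp Require Import all_boot zify boolp.

Set Implicit Arguments. Unset Strict Implicit. Unset Printing Implicit Defensive.

(* Call a play punishable if at each of its positions the opponent of the
   player to move can force an outcome that the mover does not prefer to the
   outcome of the play.  Following a punishable play and switching to the
   punishing strategy right after the first deviation is a Nash equilibrium.
   Each x_i is Pareto-optimal, since the players rank the x_i in opposite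
   orders and both prefer every x_i to y; so it suffices to find a punishable
   play whose outcome is some x_i.
   Take a play q with outcome x_1.  If along q nobody can ever force an
   x-outcome, then by determinacy the opponent of the mover can always force y,
   and q itself is punishable.  Otherwise, from the first prefix of q at which
   some player X can force an x-outcome, let K be the largest rank (in X's
   order) that X can force; by determinacy the opponent can force rank at most
   K.  Playing the two strategies against each other yields an outcome of rank
   exactly K, and each strategy punishes every deviation of the other player. *)

Local Notation prefix := Defs.prefix.

Definition opp (X : player) : player := if X is pa then pb else pa.

Lemma oppK : involutive opp. Proof. by case. Qed.

Lemma opp_neq X : opp X <> X. Proof. by case: X. Qed.

Lemma player_cases X Z : Z = X \/ Z = opp X. Proof. by case: X; case: Z; auto. Qed.

Lemma neq_opp X Z : Z <> X -> Z = opp X. Proof. by case: (player_cases X Z). Qed.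

Lemma player_eqb_refl X : player_eqb X X. Proof. by case: X. Qed.

Lemma player_eqb_opp X : player_eqb (opp X) X = false. Proof. by case: X. Qed.

Lemma player_eqbP X Z : reflect (X = Z) (player_eqb X Z).
Proof. by case: X; case: Z; constructor. Qed.

Lemma find_iota (a : pred nat) n j :
  j <= n -> (forall i, i < j -> ~~ a i) -> (j < n -> a j) -> find a (iota 0 n) = j.
Proof.
move=> le_jn before_j a_j; case: findP => [aN | i lt_in a_i before_i].
  rewrite size_iota; apply/eqP; rewrite eq_sym eqn_leq le_jn leqNgt /=; apply/negP => lt_jn.
  have j_in : j \in iota 0 n by rewrite mem_iota add0n lt_jn.
  by move: aN => /hasPn/(_ j j_in); rewrite a_j.
rewrite size_iota in lt_in.
have nth_i k : k < n -> nth 0 (iota 0 n) k = k by move=> ?; rewrite nth_iota.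
have := a_i 0; rewrite nth_i //; case: (ltngtP i j) => // [lt_ij | lt_ji].
  by rewrite (negbTE (before_j i lt_ij)).
by have := before_i 0 j lt_ji; rewrite nth_i ?a_j ?(ltn_trans lt_ji).
Qed.

Section Plays.
Variable C : Type.

Lemma size_prefix (p : nat -> C) m : size (prefix p m) = m.
Proof. exact: size_mkseq. Qed.

Lemma nth_prefix x0 (p : nat -> C) m i : i < m -> nth x0 (prefix p m) i = p i.
Proof. exact: nth_mkseq. Qed.

Lemma prefixS (p : nat -> C) m : prefix p m.+1 = rcons (prefix p m) (p m).
Proof. exact: mkseqS. Qed.

Lemma prefix_eqP (p q : nat -> C) m :
  prefix p m = prefix q m <-> forall i, i < m -> p i = q i.
Proof.
split=> [Epq i lt_im | Epq]; first by rewrite -(nth_prefix (p i) p lt_im) Epq nth_prefix.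
by apply/eq_in_map => i; rewrite mem_iota add0n => /Epq.
Qed.

Lemma prefix_eq_le (p q : nat -> C) m k :
  prefix p m = prefix q m -> k <= m -> prefix p k = prefix q k.
Proof.
by move=> /prefix_eqP Epq le_km; apply/prefix_eqP => i lt_ik; apply/Epq/(leq_trans lt_ik).
Qed.

Lemma hist_prefix (sigma : seq C -> C) k : hist sigma k = prefix (play sigma) k.
Proof. by elim: k => //= k IH; rewrite prefixS -IH. Qed.

Lemma playE (sigma : seq C -> C) k : play sigma k = sigma (prefix (play sigma) k).
Proof. by rewrite /play hist_prefix. Qed.

Lemma eq_or_first_difference (p q : nat -> C) :
  p = q \/ exists j, (forall i, i < j -> p i = q i) /\ p j <> q j.
Proof.
have [diff | ] := pselect (exists k, `[< p k <> q k >]); last first.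
  by move=> /forallNP Epq; left; apply: funext => k; apply: contrapT => /asboolT /Epq.
right; case: (ex_minnP diff) => j /asboolP pq_j min_j.
exists j; split=> // i lt_ij; apply: contrapT => /asboolT /min_j; lia.
Qed.

Lemma exists_play_from (h : seq C) (f : seq C -> C) :
  exists2 p, prefix p (size h) = h & forall k, size h <= k -> p k = f (prefix p k).
Proof.
pose sigma g := if size g < size h then nth (f [::]) h (size g) else f g.
exists (play sigma) => [|k le_hk]; last by rewrite playE /sigma size_prefix ltnNge le_hk.
apply: (@eq_from_nth _ (f [::])) => [|i]; rewrite size_prefix // => lt_ih.
by rewrite nth_prefix // playE /sigma size_prefix lt_ih.
Qed.

(* The default of [nth] makes [q] take over once [h] is exhausted. *)
Definition cat_play (h : seq C) (q : nat -> C) : nat -> C :=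
  fun k => nth (q (k - size h)) h k.

Lemma continuous_cat_play (h : seq C) : continuous_seq (cat_play h).
Proof. by move=> p n; exists n => q Eqp k lt_kn; rewrite /cat_play Eqp //; lia. Qed.

Lemma prefix_cat_play (h : seq C) (q : nat -> C) k :
  prefix (cat_play h q) (size h + k) = h ++ prefix q k.
Proof.
apply: (@eq_from_nth _ (q 0)); first by rewrite size_cat !size_prefix.
move=> i; rewrite size_prefix => lt_i; rewrite nth_prefix // nth_cat /cat_play.
case: ltnP => [lt_ih | le_hi]; first exact: set_nth_default.
by rewrite nth_default // nth_prefix //; lia.
Qed.

Lemma cat_play_drop (h : seq C) (p : nat -> C) :
  prefix p (size h) = h -> cat_play h (fun k => p (size h + k)) = p.
Proof.
move=> Eph; apply: funext => k; rewrite /cat_play; case: (ltnP k (size h)) => [lt_kh | le_hk].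
  by rewrite -[in nth _ h]Eph nth_prefix.
by rewrite nth_default // subnKC.
Qed.

Lemma prefix_from (h : seq C) (p : nat -> C) k : prefix p (size h) = h ->
  prefix p (size h + k) = h ++ prefix (fun i => p (size h + i)) k.
Proof. by move=> Eph; rewrite -{1}(cat_play_drop Eph) prefix_cat_play. Qed.

End Plays.

Section Forcing.
Variables (C : Type) (d : seq C -> player) (O : Type) (v : (nat -> C) -> O).

Definition follows (X : player) (s : seq C -> C) (m : nat) (p : nat -> C) :=
  forall k, m <= k -> d (prefix p k) = X -> p k = s (prefix p k).

Definition ensures (X : player) (h : seq C) (S : O -> Prop) (s : seq C -> C) :=
  forall p, prefix p (size h) = h -> follows X s (size h) p -> S (v p).

Definition can_force (X : player) (h : seq C) (S : O -> Prop) := exists s, ensures X h S s.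

Definition punishable_at (prec : player -> O -> O -> Prop) (p : nat -> C) (j : nat) :=
  can_force (opp (d (prefix p j))) (prefix p j)
    (fun o => ~ prec (d (prefix p j)) (v p) o).

Lemma can_force_weaken X h (S S' : O -> Prop) :
  (forall o, S o -> S' o) -> can_force X h S -> can_force X h S'.
Proof. by move=> SS' [s sS]; exists s => p Eph p_s; apply/SS'/sS. Qed.

Lemma ensures_along X h S s p m : ensures X h S s -> prefix p (size h) = h ->
  follows X s (size h) p -> size h <= m -> ensures X (prefix p m) S s.
Proof.
move=> sS Eph p_s le_hm r; rewrite size_prefix => Erp r_s.
apply: sS => [|k le_hk]; first by rewrite (prefix_eq_le Erp le_hm) Eph.
case: (ltnP k m) => [lt_km | le_mk]; last exact: r_s.
have /prefix_eqP Eki := Erp.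
by rewrite (prefix_eq_le Erp (ltnW lt_km)) Eki //; exact: p_s.
Qed.

Variable Gamma : ((nat -> C) -> Prop) -> Prop.
Hypothesis Gamma_pointclass : pointclass Gamma.
Hypothesis Gamma_determined : determined Gamma.
Hypothesis v_measurable : measurable_in Gamma v.

(* Determinacy of the win-lose game played from [h] on, with winning set
   [S], pulled back along the continuous map [cat_play h]. *)
Lemma can_force_or_opp X h S : can_force X h S \/ can_force (opp X) h (fun o => ~ S o).
Proof.
have WS := Gamma_pointclass (v_measurable S) (continuous_cat_play h).
have [[s sS] | [t tS]] := Gamma_determined WS (fun g => d (h ++ g) = X); [left | right].
  exists (fun g => s (drop (size h) g)) => p Eph p_s; rewrite -(cat_play_drop Eph).
  apply: sS => k dX; have := p_s (size h + k) (leq_addr _ _).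
  by rewrite prefix_from // drop_size_cat //; apply.
exists (fun g => t (drop (size h) g)) => p Eph p_t; rewrite -(cat_play_drop Eph).
apply: tS => k /neq_opp dX; have := p_t (size h + k) (leq_addr _ _).
by rewrite prefix_from // drop_size_cat //; apply.
Qed.

End Forcing.

Section Punishment.
Variables (C : Type) (d : seq C -> player) (O : Type) (v : (nat -> C) -> O).
Variable prec : player -> O -> O -> Prop.
Hypothesis prec_irrefl : forall X o, ~ prec X o o.
Variable p : nat -> C.
Hypothesis p_punishable : forall j, punishable_at d v prec p j.

Let punisher j : seq C -> C := proj1_sig (cid (p_punishable j)).

Let punisherP j : ensures d v (opp (d (prefix p j))) (prefix p j)
    (fun o => ~ prec (d (prefix p j)) (v p) o) (punisher j) :=
  proj2_sig (cid (p_punishable j)).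

Definition first_deviation (g : seq C) : nat :=
  find (fun i => ~~ `[< nth (p i) g i = p i >]) (iota 0 (size g)).

Lemma first_deviation_prefix r n j : j <= n -> (forall i, i < j -> r i = p i) ->
  (j < n -> r j <> p j) -> first_deviation (prefix r n) = j.
Proof.
move=> le_jn Erp neq_j; rewrite /first_deviation size_prefix.
apply: find_iota => // [i lt_ij | lt_jn].
  by rewrite negbK nth_prefix ?Erp ?(leq_trans lt_ij) //; exact: asboolT.
by rewrite nth_prefix //; apply/asboolPn/neq_j.
Qed.

Lemma first_deviation_agree r n :
  (forall i, i < n -> r i = p i) -> first_deviation (prefix r n) = n.
Proof. by move=> Erp; apply: first_deviation_prefix => //; rewrite ltnn. Qed.

Definition follow_or_punish (g : seq C) : C :=
  if first_deviation g == size g then p (size g) else punisher (first_deviation g) g.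

Lemma play_follow_or_punish : play follow_or_punish = p.
Proof.
have follow k : follow_or_punish (prefix p k) = p k.
  by rewrite /follow_or_punish first_deviation_agree ?size_prefix ?eqxx.
suff Eprefix k : prefix (play follow_or_punish) k = prefix p k.
  by apply: funext => k; rewrite playE Eprefix follow.
by elim: k => // k IH; rewrite !prefixS IH playE IH follow.
Qed.

Lemma nash_follow_or_punish : nash_eq d v prec follow_or_punish.
Proof.
move=> [X [s]]; set r := play (deviate _ _ _ _); rewrite play_follow_or_punish => better.
have rE k : r k = deviate d follow_or_punish X s (prefix r k) by exact: playE.
have [Erp | [j [Erp_j neq_j]]] := eq_or_first_difference r p.
  by move: better; rewrite Erp; apply: prec_irrefl.
have Ej : prefix r j = prefix p j by apply/prefix_eqP.
have dX : d (prefix p j) = X.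
  apply: contrapT => dnX; apply: neq_j.
  rewrite rE /deviate Ej (introF (player_eqbP _ _) dnX) /follow_or_punish.
  by rewrite first_deviation_agree ?size_prefix ?eqxx.
have := @punisherP j r; rewrite dX; apply => //; first by rewrite size_prefix.
move=> k; rewrite size_prefix => le_jk dk.
have lt_jk : j < k.
  rewrite ltn_neqAle le_jk andbT; apply/eqP => Ejk.
  by move: dk; rewrite -Ejk Ej dX => /esym /opp_neq.
rewrite rE /deviate dk player_eqb_opp /follow_or_punish.
by rewrite (@first_deviation_prefix r k j) ?size_prefix ?(ltnW lt_jk) ?(ltn_eqF lt_jk).
Qed.

Lemma punishable_nash : exists2 sigma, play sigma = p & nash_eq d v prec sigma.
Proof.
by exists follow_or_punish; [exact: play_follow_or_punish | exact: nash_follow_or_punish].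
Qed.

End Punishment.

Section Ranked.
Variables (C : Type) (d : seq C -> player) (O : Type) (v : (nat -> C) -> O).
Variable Gamma : ((nat -> C) -> Prop) -> Prop.
Hypothesis Gamma_pointclass : pointclass Gamma.
Hypothesis Gamma_determined : determined Gamma.
Hypothesis v_measurable : measurable_in Gamma v.
Variable prec : player -> O -> O -> Prop.
Variables (I : Type) (x : I -> O).
Hypothesis x_inj : injective x.

Let force_or_opp := can_force_or_opp d Gamma_pointclass Gamma_determined v_measurable.

Let ranked (rank : I -> nat) (k : nat) (o : O) := exists2 i, k <= rank i & o = x i.

Lemma punishable_after_forcing (rank : I -> nat) (N : nat) (X : player) :
    (forall i, rank i <= N) ->
    (forall i o, prec X (x i) o -> exists2 j, o = x j & rank i < rank j) ->
    (forall i o, prec (opp X) (x i) o -> exists2 j, o = x j & rank j < rank i) ->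
  forall h, can_force d v X h (fun o => exists i, o = x i) ->
  exists p, [/\ prefix p (size h) = h, exists i, v p = x i &
                forall j, size h <= j -> punishable_at d v prec p j].
Proof.
move=> rank_le prec_up prec_down h forceX.
pose forced k := `[< k <= N /\ can_force d v X h (ranked rank k) >].
have forced0 : forced 0.
  apply: asboolT; split=> //; apply: can_force_weaken forceX => o [i ->]; by exists i.
have forced_le k : forced k -> k <= N by move=> /asboolP [].
have [K /asboolP [le_KN [s sK]] max_K] := ex_maxnP (ex_intro _ 0 forced0) forced_le.
have [t tK] : can_force d v (opp X) h (fun o => ~ ranked rank K.+1 o).
  case: (ltnP K N) => [lt_KN | le_NK].
    have [forceK1 | //] := force_or_opp X h (ranked rank K.+1).
    by have := max_K K.+1 (asboolT (conj lt_KN forceK1)); rewrite ltnn.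
  by exists s => p _ _ [i le_Ki _]; have := rank_le i; lia.
have [p Eph p_st] := exists_play_from h (fun g => if player_eqb (d g) X then s g else t g).
have p_s : follows d X s (size h) p by move=> k le_hk dX; rewrite p_st // dX player_eqb_refl.
have p_t : follows d (opp X) t (size h) p.
  by move=> k le_hk dY; rewrite p_st // dY player_eqb_opp.
have [i le_Ki Epi] := sK p Eph p_s.
have rank_i : rank i = K.
  apply/eqP; rewrite eqn_leq le_Ki andbT leqNgt; apply/negP => lt_Ki.
  by apply: (tK p Eph p_t); exists i.
exists p; split=> [//| | j le_hj]; first by exists i.
rewrite /punishable_at; have [-> | ->] := player_cases X (d (prefix p j)).
  apply: can_force_weaken (ex_intro _ t (ensures_along tK Eph p_t le_hj)) => o not_above.
  by rewrite Epi => /prec_up [j' Eo]; rewrite rank_i => lt_ij'; apply: not_above; exists j'.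
rewrite oppK; apply: can_force_weaken (ex_intro _ s (ensures_along sK Eph p_s le_hj)).
move=> o [j' le_Kj' ->]; rewrite Epi => /prec_down [j'' /x_inj <-]; lia.
Qed.

Variables (y : O) (rank : I -> nat) (N : nat).
Hypothesis rank_le : forall i, rank i <= N.
Hypothesis outcome_cases : forall o, o = y \/ exists i, o = x i.
Hypothesis prec_pa : forall i o, prec pa (x i) o -> exists2 j, o = x j & rank i < rank j.
Hypothesis prec_pb : forall i o, prec pb (x i) o -> exists2 j, o = x j & rank j < rank i.
Hypothesis not_prec_y : forall X o, ~ prec X o y.

Let rank_for (Z : player) (i : I) := if Z is pa then rank i else N - rank i.

Lemma rank_for_le Z i : rank_for Z i <= N.
Proof. by case: Z; [exact: rank_le | exact: leq_subr]. Qed.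

Lemma prec_rank_for Z i o : prec Z (x i) o -> exists2 j, o = x j & rank_for Z i < rank_for Z j.
Proof.
case: Z => [/prec_pa | /prec_pb] [j -> lt_ji]; exists j => //=.
by have := rank_le i; lia.
Qed.

Lemma prec_opp_rank_for Z i o :
  prec (opp Z) (x i) o -> exists2 j, o = x j & rank_for Z j < rank_for Z i.
Proof.
case: Z => [/prec_pb | /prec_pa] [j -> lt_ij]; exists j => //=.
by have := rank_le j; lia.
Qed.

Lemma exists_punishable_play q i0 : v q = x i0 ->
  exists p, (exists i, v p = x i) /\ forall j, punishable_at d v prec p j.
Proof.
move=> Eq; pose good o := exists i, o = x i.
have punishable_unforceable r j :
    ~ (exists Z, can_force d v Z (prefix r j) good) -> punishable_at d v prec r j.
  move=> unforceable; have [forceZ | forceY] := force_or_opp (d (prefix r j)) (prefix r j) good.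
    by case: unforceable; exists (d (prefix r j)).
  apply: can_force_weaken forceY => o not_good.
  by case: (outcome_cases o) => [-> | /not_good []]; apply: not_prec_y.
have [forced | unforced] :=
  pselect (exists m, `[< exists Z, can_force d v Z (prefix q m) good >]); last first.
  exists q; split=> [|j]; first by exists i0.
  by apply: punishable_unforceable => forced; apply: unforced; exists j; apply: asboolT.
have [m /asboolP [Z forceZ] min_m] := ex_minnP forced.
have [p [Eqp [i Epi] punish_after]] := punishable_after_forcing
  (@rank_for_le Z) (@prec_rank_for Z) (@prec_opp_rank_for Z) forceZ.
rewrite size_prefix in Eqp punish_after.
exists p; split=> [|j]; first by exists i.
case: (leqP m j) => [le_mj | lt_jm]; first exact: punish_after.
apply: punishable_unforceable; rewrite (prefix_eq_le Eqp (ltnW lt_jm)) => forced_j.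
by have := min_m j (asboolT forced_j); lia.
Qed.

End Ranked.

Section LinearPreferences.
Variables (O : Type) (n : nat) (y : O) (x : 'I_n -> O).
Variable prec : player -> O -> O -> Prop.
Hypothesis x_inj : injective x.
Hypothesis x_neq_y : forall i, x i <> y.
Hypothesis prec_pa_iff : forall o o', prec pa o o' <->
  (o = y /\ exists j, o' = x j) \/ (exists i j, o = x i /\ o' = x j /\ i < j).
Hypothesis prec_pb_iff : forall o o', prec pb o o' <->
  (o = y /\ exists j, o' = x j) \/ (exists i j, o = x i /\ o' = x j /\ j < i).

Lemma prec_x X i o : prec X (x i) o ->
  exists2 j, o = x j & if X is pa then i < j else j < i.
Proof.
by case: X => [/prec_pa_iff | /prec_pb_iff] [[/x_neq_y []] | [i' [j [/x_inj <- [-> lt]]]]];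
  exists j.
Qed.

Lemma prec_irrefl X o : ~ prec X o o.
Proof.
by case: X => [/prec_pa_iff | /prec_pb_iff]
  [[-> [j /esym /x_neq_y []]] | [i [j [-> [/x_inj -> ]]]]]; rewrite ltnn.
Qed.

Lemma not_prec_y X o : ~ prec X o y.
Proof.
by case: X => [/prec_pa_iff | /prec_pb_iff]
  [[_ [j /esym /x_neq_y []]] | [i [j [_ [/esym /x_neq_y []]]]]].
Qed.

Lemma pareto_optimal_x C (v : (nat -> C) -> O) i : pareto_optimal v prec (x i).
Proof.
move=> [o [_ [[X /prec_x [j -> lt]] no_worse]]].
case: X lt => lt; [apply: (no_worse pb) | apply: (no_worse pa)].
  by apply/prec_pb_iff; right; exists j, i.
by apply/prec_pa_iff; right; exists j, i.
Qed.

End LinearPreferences.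

Theorem lemma30
  (C : Type) (c0 : C)
  (Gamma : ((nat -> C) -> Prop) -> Prop)
  (HGamma : pointclass Gamma) (Hdet : determined Gamma)
  (d : seq C -> player)
  (n : nat) (Hn : 1 <= n)
  (O : Type) (y : O) (x : 'I_n -> O)
  (Hxinj : injective x) (Hxy : forall i, x i <> y)
  (HO : forall o : O, o = y \/ exists i, o = x i)
  (v : (nat -> C) -> O)
  (Hreal : forall o : O, realizable v o)
  (Hmeas : measurable_in Gamma v)
  (prec : player -> O -> O -> Prop)
  (Hprec_a : forall o o' : O, prec pa o o' <->
      (o = y /\ exists j, o' = x j) \/
      (exists i j, o = x i /\ o' = x j /\ (i < j)%N))
  (Hprec_b : forall o o' : O, prec pb o o' <->
      (o = y /\ exists j, o' = x j) \/
      (exists i j, o = x i /\ o' = x j /\ (j < i)%N)) :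
  exists sigma : seq C -> C,
    nash_eq d v prec sigma /\ pareto_optimal v prec (v (play sigma)).
Proof.
have [q Eq] := Hreal (x (Ordinal Hn)).
have [p [[i Epi] punishable_p]] :
    exists p, (exists i, v p = x i) /\ forall j, punishable_at d v prec p j.
  apply: (exists_punishable_play d HGamma Hdet Hmeas Hxinj (rank := @nat_of_ord n) (N := n)
    _ HO _ _ _ Eq) => [j | j o | j o | ]; first exact: ltnW.
  - by move/(prec_x Hxinj Hxy Hprec_a Hprec_b).
  - by move/(prec_x Hxinj Hxy Hprec_a Hprec_b).
  - exact: not_prec_y Hxy Hprec_a Hprec_b.
have [sigma play_sigma nash_sigma] :=
  punishable_nash (prec_irrefl Hxinj Hxy Hprec_a Hprec_b) punishable_p.
exists sigma; split=> //; rewrite play_sigma Epi.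
exact: (pareto_optimal_x Hxinj Hxy Hprec_a Hprec_b (v := v) (i := i)).
Qed.
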